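(* Let $(\mathcal A,(p_n))$ be a Fréchet algebra, $I$ a closed ideal of $\mathcal A$, and $J$ a closed ideal of $\mathcal A$ with $J\subseteq I$. If $\mathcal A$ is amenable modulo $I$, then the Fréchet algebra $\mathcal A/J$ is amenable modulo $I/J$.
   Context: A Fréchet algebra $(\mathcal A,(p_n))$ is a complete Hausdorff topological algebra whose topology is given by an increasing sequence of submultiplicative seminorms $p_n$; $\mathcal A/J$ carries the quotient seminorms $\hat p_n(a+J)=\inf\{p_n(a+b):b\in J\}$ and $I/J$ is a closed ideal of it. A Fréchet algebra $\mathcal A$ is amenable modulo a closed ideal $I$ if for every Banach $\mathcal A$-bimodule $E$ (with continuous module actions) such that $I\cdot E=E\cdot I=0$, every continuous derivation $D:\mathcal A\to E^*$ is inner on $\mathcal A\setminus I$, i.e. there is $f\in E^*$ with $D(a)=a\cdot f-f\cdot a$ for all $a\in\mathcal A\setminus I$. *)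

From HB Require Import structures.
From mathcomp Require Import all_boot all_order all_algebra.
Set Implicit Arguments. Unset Strict Implicit. Unset Printing Implicit Defensive.
Import Order.TTheory GRing.Theory Num.Theory.
Local Open Scope ring_scope.

Section Frechet.
Variable K : numFieldType.

Definition is_algebra (A : lmodType K) (mul : A -> A -> A) : Prop :=
  [/\ forall x y z, mul (mul x y) z = mul x (mul y z),
      forall x y z, mul (x + y) z = mul x z + mul y z,
      forall x y z, mul x (y + z) = mul x y + mul x z,
      forall (k : K) x y, mul (k *: x) y = k *: mul x y
    & forall (k : K) x y, mul x (k *: y) = k *: mul x y].

Definition seminorm (A : lmodType K) (p : A -> K) : Prop :=
  [/\ forall x, 0 <= p x,
      forall x y, p (x + y) <= p x + p y
    & forall (k : K) x, p (k *: x) = `|k| * p x].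

Definition submult_seminorm (A : lmodType K) (mul : A -> A -> A) (p : A -> K) : Prop :=
  seminorm p /\ forall x y, p (mul x y) <= p x * p y.

Definition frechet_algebra (A : lmodType K) (mul : A -> A -> A) (p : nat -> A -> K) : Prop :=
  [/\ is_algebra mul,
      forall n, submult_seminorm mul (p n),
      forall n x, p n x <= p n.+1 x,
      forall x, (forall n, p n x = 0) -> x = 0
    & forall u : nat -> A,
        (forall n (e : K), 0 < e -> exists N, forall i j, (N <= i)%N -> (N <= j)%N ->
            p n (u i - u j) < e) ->
        exists l, forall n (e : K), 0 < e -> exists N, forall i, (N <= i)%N ->
            p n (u i - l) < e].

(* Closed subset of A (the balls {y | p_n(y-x) < e} form a neighbourhood base). *)
Definition closed_in (A : lmodType K) (p : nat -> A -> K) (S : A -> Prop) : Prop :=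
  forall x, ~ S x -> exists n (e : K), 0 < e /\ forall y, p n (y - x) < e -> ~ S y.

Definition ideal (A : lmodType K) (mul : A -> A -> A) (I : A -> Prop) : Prop :=
  [/\ I 0, forall x y, I x -> I y -> I (x + y),
      forall (k : K) x, I x -> I (k *: x),
      forall a x, I x -> I (mul a x)
    & forall a x, I x -> I (mul x a)].

Definition closed_ideal (A : lmodType K) (mul : A -> A -> A) (p : nat -> A -> K)
  (I : A -> Prop) : Prop := ideal mul I /\ closed_in p I.

Definition banach_space (E : lmodType K) (nE : E -> K) : Prop :=
  [/\ seminorm nE, forall x, nE x = 0 -> x = 0
    & forall u : nat -> E,
        (forall (e : K), 0 < e -> exists N, forall i j, (N <= i)%N -> (N <= j)%N ->
            nE (u i - u j) < e) ->
        exists l, forall (e : K), 0 < e -> exists N, forall i, (N <= i)%N ->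
            nE (u i - l) < e].

Definition banach_bimodule (A : lmodType K) (mul : A -> A -> A) (p : nat -> A -> K)
  (E : lmodType K) (nE : E -> K) (l : A -> E -> E) (r : E -> A -> E) : Prop :=
  [/\ banach_space nE,
      [/\ forall a b x, l (a + b) x = l a x + l b x,
          forall a x y, l a (x + y) = l a x + l a y,
          forall (k : K) a x, l (k *: a) x = k *: l a x
        & forall (k : K) a x, l a (k *: x) = k *: l a x] /\
      [/\ forall a b x, r x (a + b) = r x a + r x b,
          forall a x y, r (x + y) a = r x a + r y a,
          forall (k : K) a x, r x (k *: a) = k *: r x a
        & forall (k : K) a x, r (k *: x) a = k *: r x a],
      [/\ forall a b x, l (mul a b) x = l a (l b x),
          forall a b x, r x (mul a b) = r (r x a) b
        & forall a b x, r (l a x) b = l a (r x b)],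
      (forall a x (e : K), 0 < e -> exists n (d : K), 0 < d /\
          forall b y, p n (b - a) < d -> nE (y - x) < d -> nE (l b y - l a x) < e)
    & (forall a x (e : K), 0 < e -> exists n (d : K), 0 < d /\
          forall b y, p n (b - a) < d -> nE (y - x) < d -> nE (r y b - r x a) < e)].

Definition in_dual (E : lmodType K) (nE : E -> K) (f : E -> K) : Prop :=
  [/\ forall x y, f (x + y) = f x + f y,
      forall (k : K) x, f (k *: x) = k * f x
    & forall x (e : K), 0 < e -> exists d : K, 0 < d /\
          forall y, nE (y - x) < d -> `|f y - f x| < e].

(* Continuous derivation D : A -> E^*, where E^* carries the dual actions
   (a.f)(x) = f(x.a), (f.a)(x) = f(a.x), and the dual-norm topology. *)
Definition continuous_derivation (A : lmodType K) (mul : A -> A -> A) (p : nat -> A -> K)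
  (E : lmodType K) (nE : E -> K) (l : A -> E -> E) (r : E -> A -> E)
  (D : A -> E -> K) : Prop :=
  [/\ forall a, in_dual nE (D a),
      forall a b x, D (a + b) x = D a x + D b x,
      forall (k : K) a x, D (k *: a) x = k * D a x,
      (* D(ab) = a.D(b) + D(a).b *)
      forall a b x, D (mul a b) x = D b (r x a) + D a (l b x)
    & (* continuity for the dual norm: ||D b - D a|| <= e near a *)
      forall a (e : K), 0 < e -> exists n (d : K), 0 < d /\
          forall b, p n (b - a) < d -> forall x, `|D b x - D a x| <= e * nE x].

Definition amenable_modulo (A : lmodType K) (mul : A -> A -> A) (p : nat -> A -> K)
  (I : A -> Prop) : Prop :=
  forall (E : lmodType K) (nE : E -> K) (l : A -> E -> E) (r : E -> A -> E),
    banach_bimodule mul p nE l r ->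
    (forall i x, I i -> l i x = 0) ->
    (forall i x, I i -> r x i = 0) ->
    forall D : A -> E -> K, continuous_derivation mul p nE l r D ->
    exists f : E -> K, in_dual nE f /\
      forall a, ~ I a -> forall x, D a x = f (r x a) - f (l a x).

(* (B, mulB, q) is (an isomorphic copy of) the quotient Fréchet algebra A/J via
   the quotient map pi : A -> B, with quotient seminorms
   q_n(pi a) = inf { p_n(a + b) : b in J }. *)
Definition is_quotient_algebra (A : lmodType K) (mul : A -> A -> A) (p : nat -> A -> K)
  (J : A -> Prop) (B : lmodType K) (mulB : B -> B -> B) (q : nat -> B -> K)
  (pi : A -> B) : Prop :=
  [/\ forall x y, pi (x + y) = pi x + pi y,
      forall (k : K) x, pi (k *: x) = k *: pi x,
      forall x y, pi (mul x y) = mulB (pi x) (pi y),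
      forall y, exists x, pi x = y
    & forall x, pi x = 0 <-> J x] /\
    (forall n a,
        (forall b, J b -> q n (pi a) <= p n (a + b)) /\
        (forall e : K, 0 < e -> exists b, J b /\ p n (a + b) < q n (pi a) + e)).

End Frechet.

From mathcomp Require Import all_boot all_order all_algebra.
Set Implicit Arguments. Unset Strict Implicit. Unset Printing Implicit Defensive.
Import Order.TTheory GRing.Theory Num.Theory.
Local Open Scope ring_scope.

(* A Banach bimodule E over A/J annihilated by I/J becomes, through the quotient
   map pi, a Banach A-bimodule annihilated by I, and a derivation D into its dual
   becomes the derivation D \o pi. Since pi is contractive for the quotient
   seminorms, all continuity conditions survive the pullback. Amenability of A
   modulo I makes D \o pi inner off I, and since pi is onto, the same functional
   makes D inner off I/J. *)

Section Pullback.
Variables (K : numFieldType) (A B : lmodType K).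
Variables (mul : A -> A -> A) (mulB : B -> B -> B).
Variables (p : nat -> A -> K) (q : nat -> B -> K) (pi : A -> B).
Hypothesis piD : forall x y, pi (x + y) = pi x + pi y.
Hypothesis piZ : forall (k : K) x, pi (k *: x) = k *: pi x.
Hypothesis piM : forall x y, pi (mul x y) = mulB (pi x) (pi y).
Hypothesis pi_contractive : forall n x, q n (pi x) <= p n x.

Lemma pi_sub (a b : A) : pi (b - a) = pi b - pi a.
Proof. by rewrite piD -scaleN1r piZ scaleN1r. Qed.

Lemma pi_near n (d : K) (a b : A) : p n (b - a) < d -> q n (pi b - pi a) < d.
Proof. by rewrite -pi_sub; apply: le_lt_trans. Qed.

Section Modules.
Variables (E : lmodType K) (nE : E -> K) (l : B -> E -> E) (r : E -> B -> E).

Lemma banach_bimodule_comp :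
  banach_bimodule mulB q nE l r ->
  banach_bimodule mul p nE (fun a => l (pi a)) (fun x a => r x (pi a)).
Proof.
move=> [bE [[l1 l2 l3 l4] [r1 r2 r3 r4]] [m1 m2 m3] lc rc]; split => //.
- by split; split => *; rewrite ?piD ?piZ ?l1 ?l2 ?l3 ?l4 ?r1 ?r2 ?r3 ?r4.
- by split => *; rewrite ?piM ?m1 ?m2 ?m3.
- move=> a x e e0; have [n [d [d0 lcont]]] := lc (pi a) x e e0.
  by exists n, d; split => // b y /pi_near; apply: lcont.
- move=> a x e e0; have [n [d [d0 rcont]]] := rc (pi a) x e e0.
  by exists n, d; split => // b y /pi_near; apply: rcont.
Qed.

Lemma continuous_derivation_comp (D : B -> E -> K) :
  continuous_derivation mulB q nE l r D ->
  continuous_derivation mul p nE (fun a => l (pi a)) (fun x a => r x (pi a))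
    (fun a => D (pi a)).
Proof.
move=> [Dd DD DZ DM Dc]; split => //.
- by move=> a b x; rewrite piD DD.
- by move=> k a x; rewrite piZ DZ.
- by move=> a b x; rewrite piM DM.
- move=> a e e0; have [n [d [d0 Dcont]]] := Dc (pi a) e e0.
  by exists n, d; split => // b /pi_near; apply: Dcont.
Qed.

End Modules.

Hypothesis pi_surj : forall y, exists x, pi x = y.

Lemma amenable_modulo_image (I : A -> Prop) :
  amenable_modulo mul p I ->
  amenable_modulo mulB q (fun y => exists x, I x /\ pi x = y).
Proof.
move=> amenA E nE l r bimod lI rI D Dder.
have [f [f_dual f_inner]] := amenA E nE _ _ (banach_bimodule_comp bimod)
  (fun i x Ii => lI (pi i) x (ex_intro _ i (conj Ii erefl)))
  (fun i x Ii => rI (pi i) x (ex_intro _ i (conj Ii erefl)))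
  _ (continuous_derivation_comp Dder).
exists f; split => // b not_Ib x; case: (pi_surj b) => a <- in not_Ib *.
by apply: f_inner => Ia; apply: not_Ib; exists a.
Qed.

End Pullback.

Lemma quotient_map_contractive (K : numFieldType) (A : lmodType K)
  (mul : A -> A -> A) (p : nat -> A -> K) (J : A -> Prop)
  (B : lmodType K) (mulB : B -> B -> B) (q : nat -> B -> K) (pi : A -> B) :
  J 0 -> is_quotient_algebra mul p J mulB q pi -> forall n x, q n (pi x) <= p n x.
Proof.
by move=> J0 [_ qinf] n x; have := (qinf n x).1 0 J0; rewrite addr0.
Qed.

Theorem proposition2p11 (K : numFieldType)
  (A : lmodType K) (mul : A -> A -> A) (p : nat -> A -> K) (I J : A -> Prop)
  (B : lmodType K) (mulB : B -> B -> B) (q : nat -> B -> K) (pi : A -> B) :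
  frechet_algebra mul p ->
  closed_ideal mul p I ->
  closed_ideal mul p J ->
  (forall x, J x -> I x) ->
  is_quotient_algebra mul p J mulB q pi ->
  amenable_modulo mul p I ->
  amenable_modulo mulB q (fun y => exists x, I x /\ pi x = y).
Proof.
move=> _ _ [[J0 _ _ _ _] _] _ quot.
have pi_contractive := quotient_map_contractive J0 quot.
have [[piD piZ piM pi_surj _] _] := quot.
exact: amenable_modulo_image.
Qed.
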